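(* Let $0\leq A<B$ be integers. There exist integers $L\geq 2$ and $a_j,b_j$ for $2\leq j\leq L$ such that \[ A=a_2\leq\cdots\leq a_L=b_L\leq\cdots\leq b_2=B, \] with $\varepsilon_i(a_j)=\varepsilon_i(b_j)=0$ for $2\leq i<j\leq L$, and $a_{j+1}-a_j\in\{0,F_{j-1}\}$ and $b_j-b_{j+1}\in\{0,F_j\}$ for $2\leq j<L$.
   Context: Let $F_0=0$, $F_1=1$, $F_k=F_{k-1}+F_{k-2}$ be the Fibonacci numbers. Every positive integer $n$ has a unique (Zeckendorf) representation $n=\sum_{i\geq 2}\varepsilon_i(n)F_i$ with $\varepsilon_i(n)\in\{0,1\}$ and $\varepsilon_i(n)=1\Rightarrow\varepsilon_{i+1}(n)=0$; for $n=0$ all $\varepsilon_i(0)=0$. *)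

From mathcomp Require Import all_boot.
Set Implicit Arguments. Unset Strict Implicit. Unset Printing Implicit Defensive.

Fixpoint fib (k : nat) : nat :=
  match k with
  | 0 => 0
  | 1 => 1
  | (k'.+1 as k1).+1 => fib k1 + fib k'
  end.

Definition zeck_valid (S : seq nat) : Prop :=
  uniq S /\ (forall i, i \in S -> 2 <= i) /\ (forall i, i \in S -> i.+1 \notin S).

(* eps_i(n) = 1 : i belongs to the (unique) Zeckendorf representation of n,
   i.e. n = \sum_{i in S} F_i with S a Zeckendorf index set.  For n = 0 the
   representation is empty, so all digits vanish. *)
Definition zeck_digit (i n : nat) : Prop :=
  exists S : seq nat, zeck_valid S /\ \sum_(k <- S) fib k = n /\ i \in S.

From mathcomp Require Import all_boot zify.
Set Implicit Arguments. Unset Strict Implicit. Unset Printing Implicit Defensive.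

(* Say n is j-admissible ([zeck_ge j n]) when its Zeckendorf representation
   only uses indices >= j; by uniqueness of the representation this means
   eps_i(n) = 0 for i < j.  Two distinct j-admissible numbers differ by at least
   F_(j-1): comparing the top indices of the representations, a Zeckendorf sum
   over indices in [k, m) is at most F_m - F_(k-1).  To pass from level j to
   j+1, a j-admissible a_j either is already (j+1)-admissible or contains F_j,
   and then adding F_(j-1) turns F_j into F_(j+1), carrying upwards; dually b_j
   either stays or drops its digit F_j.  The gap property keeps a <= b along the
   way and forces a_j = b_j as soon as F_(j-1) > B. *)

Lemma fibSS n : fib n.+2 = fib n.+1 + fib n. Proof. by []. Qed.

Lemma fib_gt0 n : 0 < n -> 0 < fib n.
Proof. by case: n => // n _; elim: n => // n IH; rewrite fibSS addn_gt0 IH. Qed.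

Lemma fib_leqS n : fib n <= fib n.+1.
Proof. by case: n => // n; rewrite fibSS leq_addr. Qed.

Lemma leq_pred_fib n : n.-1 <= fib n.
Proof.
case: n => //= n; elim: n => // -[|n] IH //.
by have := @fib_gt0 n.+1 isT; rewrite fibSS; lia.
Qed.

Definition fibsum (S : seq nat) : nat := \sum_(i <- S) fib i.

Lemma fibsum_rem S m :
  uniq S -> m \in S -> fibsum S = fib m + fibsum [seq i <- S | i != m].
Proof. by move=> uS mS; rewrite /fibsum big_filter (bigD1_seq m). Qed.

Lemma fibsum_eq_mem S T : uniq S -> uniq T -> S =i T -> fibsum S = fibsum T.
Proof. by move=> uS uT eqST; apply/perm_big/uniq_perm. Qed.

Lemma fib_leq_fibsum S m : uniq S -> m \in S -> fib m <= fibsum S.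
Proof. by move=> uS mS; rewrite (fibsum_rem uS mS) leq_addr. Qed.

Lemma mem_fibsum_lt S m : uniq S -> m \in S -> m < (fibsum S).+2.
Proof.
by move=> uS mS; have := fib_leq_fibsum uS mS; have := leq_pred_fib m; lia.
Qed.

Lemma zeck_valid_filter S m : zeck_valid S -> zeck_valid [seq i <- S | i != m].
Proof.
move=> [uS [ge2 noS]]; split; first exact: filter_uniq.
split=> i; rewrite mem_filter => /andP [_ iS]; first exact: ge2.
by rewrite mem_filter negb_and noS ?orbT.
Qed.

Lemma zeck_valid_cons m S :
  2 <= m -> zeck_valid S -> {in S, forall i, m.+2 <= i} -> zeck_valid (m :: S).
Proof.
move=> m2 [uS [ge2 noS]] geS.
have notinS k : k <= m.+1 -> k \notin S by move=> le_km; apply/negP => /geS; lia.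
split; first by rewrite /= uS notinS.
split=> i; rewrite in_cons ?in_cons ?negb_or => /orP [/eqP -> | iS] //; first exact: ge2.
  by rewrite notinS // andbT; apply/eqP; lia.
by rewrite noS // andbT; have := geS i iS; apply/contraTN => /eqP; lia.
Qed.

Lemma range_nil (X : seq nat) k m : {in X, forall i, k <= i < m} -> m <= k -> X = [::].
Proof. by case: X => // x X rX le_mk; have := rX x (mem_head x X); lia. Qed.

Lemma range_notin (X : seq nat) k m :
  {in X, forall i, k <= i < m.+1} -> m \notin X -> {in X, forall i, k <= i < m}.
Proof.
move=> rX mX i iX; have ne_im : i != m by apply: contraNneq mX => <-.
by have := rX i iX; lia.
Qed.

Lemma range_filter (X : seq nat) k m :
  {in X, forall i, k <= i < m.+1} -> {in [seq i <- X | i != m], forall i, k <= i < m}.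
Proof. by move=> rX i; rewrite mem_filter => /andP [/eqP ne_im /rX]; lia. Qed.

Lemma fibsum_bound k m (X : seq nat) : zeck_valid X -> {in X, forall i, k <= i < m} ->
  k <= m.+1 -> fibsum X + fib k.-1 <= fib m.
Proof.
elim/ltn_ind: m X => -[|m] IH X vX rX le_km.
  by rewrite (range_nil rX (leq0n k)) /fibsum big_nil (_ : k.-1 = 0) //; lia.
case: (boolP (m \in X)) => mX; last first.
  case: (leqP k m.+1) => [le_k_m | lt_m_k]; last first.
    by rewrite (range_nil rX (ltnW lt_m_k)) /fibsum big_nil (_ : k.-1 = m.+1) //; lia.
  by have := IH m (ltnSn m) X vX (range_notin rX mX) le_k_m; have := fib_leqS m; lia.
have [uX [ge2 noS]] := vX.
have rX' : {in [seq i <- X | i != m], forall i, k <= i < m.-1}.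
  move=> i iX'; have := range_filter rX iX'; move: iX'; rewrite mem_filter => /andP [_ iX].
  have : i.+1 != m by apply: contraNneq (noS i iX) => ->.
  lia.
have := IH m.-1 _ _ (zeck_valid_filter m vX) rX'.
have := rX m mX; have := ge2 m mX; rewrite (fibsum_rem uX mX).
case: m {IH rX le_km mX rX'} => // m; rewrite fibSS /=; lia.
Qed.

Lemma fibsum_le_cases k m (X Y : seq nat) : 2 <= k -> zeck_valid X -> zeck_valid Y ->
  {in X, forall i, k <= i < m} -> {in Y, forall i, k <= i < m} ->
  fibsum X <= fibsum Y -> X =i Y \/ fibsum X + fib k.-1 <= fibsum Y.
Proof.
move=> k2; elim: m X Y => [|m IH] X Y vX vY rX rY le_XY.
  by rewrite (range_nil rX (leq0n k)) (range_nil rY (leq0n k)); left.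
have [[uX _] [uY _]] := (vX, vY).
case: (boolP (m \in X)) => mX; case: (boolP (m \in Y)) => mY.
- move: le_XY; rewrite (fibsum_rem uX mX) (fibsum_rem uY mY) leq_add2l => le_XY'.
  case: (IH _ _ (zeck_valid_filter m vX) (zeck_valid_filter m vY)
          (range_filter rX) (range_filter rY) le_XY') => [eqXY | ?]; last by right; lia.
  left=> i; have := eqXY i; rewrite !mem_filter.
  by case: (eqVneq i m) => [-> | _] //=; rewrite mX mY.
- have fib_pos : 0 < fib k.-1 by apply: fib_gt0; lia.
  have := rX m mX; have := fib_leq_fibsum uX mX.
  by have := fibsum_bound vY (range_notin rY mY); lia.
- right; have := rY m mY; have := fib_leq_fibsum uY mY.
  have := fibsum_bound vX (range_notin rX mX); lia.
- exact: IH _ _ vX vY (range_notin rX mX) (range_notin rY mY) le_XY.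
Qed.

Definition zeck_ge (j n : nat) : Prop :=
  exists S, [/\ zeck_valid S, fibsum S = n & {in S, forall i, j <= i}].

Lemma zeck_ge_gap k x y : 2 <= k -> zeck_ge k x -> zeck_ge k y -> x < y -> x + fib k.-1 <= y.
Proof.
move=> k2 [X [vX <- geX]] [Y [vY <- geY]] lt_XY.
have [[uX _] [uY _]] := (vX, vY).
have rX : {in X, forall i, k <= i < (fibsum Y).+2}.
  by move=> i iX; rewrite geX //=; have := mem_fibsum_lt uX iX; lia.
have rY : {in Y, forall i, k <= i < (fibsum Y).+2}.
  by move=> i iY; rewrite geY // mem_fibsum_lt.
case: (fibsum_le_cases k2 vX vY rX rY (ltnW lt_XY)) => // eqXY.
by move: lt_XY; rewrite (fibsum_eq_mem uX uY eqXY) ltnn.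
Qed.

Lemma zeck_ge_no_digit i j n : i < j -> zeck_ge j n -> ~ zeck_digit i n.
Proof.
move=> lt_ij [S [vS eS geS]] [T [vT [eT iT]]]; rewrite -/(fibsum T) in eT.
have [[uS [ge2S _]] [uT [ge2T _]]] := (vS, vT).
have rS : {in S, forall l, 2 <= l < n.+2}.
  by move=> l lS; rewrite ge2S // -eS mem_fibsum_lt.
have rT : {in T, forall l, 2 <= l < n.+2}.
  by move=> l lT; rewrite ge2T // -eT mem_fibsum_lt.
have le_ST : fibsum S <= fibsum T by rewrite eS eT.
case: (fibsum_le_cases (leqnn 2) vS vT rS rT le_ST) => [eqST | ]; last by rewrite eS eT /=; lia.
by have := geS i; rewrite eqST => /(_ iT); lia.
Qed.

Lemma zeck_ge_le j k n : j <= k -> zeck_ge k n -> zeck_ge j n.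
Proof. by move=> le_jk [S [vS eS geS]]; exists S; split=> // i /geS; apply: leq_trans. Qed.

Lemma zeck_ge_split j x :
  zeck_ge j x -> zeck_ge j.+1 x \/ exists2 u, x = fib j + u & zeck_ge j.+2 u.
Proof.
move=> [S [vS eS geS]]; have [uS [_ noS]] := vS.
case: (boolP (j \in S)) => jS; last first.
  left; exists S; split=> // i iS; have := geS i iS.
  have : i != j by apply: contraNneq jS => <-.
  lia.
right; exists (fibsum [seq i <- S | i != j]); first by rewrite -eS (fibsum_rem uS jS).
exists [seq i <- S | i != j]; split=> //; first exact: zeck_valid_filter.
move=> i; rewrite mem_filter => /andP [ne_ij iS]; have := geS i iS.
have : i != j.+1 by apply: contraNneq (noS j jS) => <-.
lia.
Qed.

Lemma zeck_ge_cons m x : 2 <= m -> zeck_ge m.+2 x -> zeck_ge m (fib m + x).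
Proof.
move=> m2 [S [vS eS geS]]; exists (m :: S); split.
- exact: zeck_valid_cons.
- by rewrite /fibsum big_cons -/(fibsum S) eS.
- by move=> i; rewrite in_cons => /orP [/eqP -> // | /geS]; lia.
Qed.

Lemma zeck_ge_carry m x : 2 <= m -> zeck_ge m.+1 x -> zeck_ge m (fib m + x).
Proof.
elim/ltn_ind: x m => x IH m m2 hx.
case: (zeck_ge_split hx) => [hx2 | [u ex hu]]; first exact: zeck_ge_cons.
have lt_ux : u < x by rewrite ex -addn1 addnC leq_add2r fib_gt0.
apply: (zeck_ge_le (leqW (leqnSn m))).
by rewrite ex addnA (addnC (fib m)) -fibSS; apply: IH => //; apply: leqW (leqW m2).
Qed.

Lemma zeck_ge2 n : zeck_ge 2 n.
Proof.
elim: n => [|n IH]; first by exists [::]; split; rewrite // /fibsum big_nil.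
case: (zeck_ge_split IH) => [h3 | [u -> hu]]; first exact: (zeck_ge_carry (leqnn 2) h3).
exact: (zeck_ge_le (leqnSn 2) (zeck_ge_carry (leqnSn 2) hu)).
Qed.

Lemma zeck_ge_step j x y : 2 <= j -> x < y -> zeck_ge j x -> zeck_ge j y ->
  exists x' y', [/\ zeck_ge j.+1 x', zeck_ge j.+1 y', x' <= y',
    x' = x \/ x' = x + fib j.-1 & y = y' \/ y = y' + fib j].
Proof.
move=> j2 lt_xy hx hy.
have fibSj : fib j.+1 = fib j + fib j.-1 by case: j j2 {hx hy}.
have carry u : zeck_ge j.+2 u -> zeck_ge j.+1 (fib j + u + fib j.-1).
  by move=> hu; rewrite -addnA (addnC u) addnA -fibSj; apply: zeck_ge_carry (leqW j2) hu.
case: (zeck_ge_split hx) => [hx1 | [u ex hu]];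
  case: (zeck_ge_split hy) => [hy1 | [v ey hv]].
- by exists x, y; split; [| | apply: ltnW | left | left].
- exists x, v; split; [done | exact: zeck_ge_le hv | | by left | by right; rewrite ey addnC].
  rewrite leqNgt; apply/negP => lt_vx.
  by have := zeck_ge_gap (leqW j2) (zeck_ge_le (leqnSn _) hv) hx1 lt_vx; rewrite succnK; lia.
- exists (x + fib j.-1), y; split; [by rewrite ex; apply: carry | done | | by right | by left].
  exact: zeck_ge_gap j2 hx hy lt_xy.
- exists (x + fib j.-1), v; split; [by rewrite ex; apply: carry | exact: zeck_ge_le hv | |
    by right | by right; rewrite ey addnC].
  have lt_uv : u < v by lia.
  by have := zeck_ge_gap (leqW (leqW j2)) hu hv lt_uv; rewrite succnK; lia.
Qed.

Definition zeck_ladder (j L : nat) (a b : nat -> nat) : Prop :=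
  [/\ j <= L, a L = b L,
      forall k, j <= k <= L -> zeck_ge k (a k) /\ zeck_ge k (b k),
      forall k, j <= k < L -> a k.+1 = a k \/ a k.+1 = a k + fib k.-1
    & forall k, j <= k < L -> b k = b k.+1 \/ b k = b k.+1 + fib k].

Lemma zeck_ladder_refl j x : zeck_ge j x -> zeck_ladder j j (fun=> x) (fun=> x).
Proof.
move=> hx; split=> // k range_k; try lia.
by have -> : k = j by lia.
Qed.

Lemma zeck_ladder_cons j L a b x y :
  zeck_ladder j.+1 L a b -> zeck_ge j x -> zeck_ge j y ->
  a j.+1 = x \/ a j.+1 = x + fib j.-1 -> y = b j.+1 \/ y = b j.+1 + fib j ->
  zeck_ladder j L (fun k => if k == j then x else a k) (fun k => if k == j then y else b k).
Proof.
move=> [lt_jL eq_ab zab sa sb] hx hy sx sy.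
have ne_Sj k : j <= k -> (k.+1 == j) = false by move=> le_jk; apply/eqP; lia.
split=> [| | k /andP [le_jk le_kL] | k /andP [le_jk lt_kL] | k /andP [le_jk lt_kL]].
- exact: ltnW.
- by have -> : (L == j) = false by apply/eqP; lia.
- by case: eqVneq => [-> // | ne_kj]; apply: zab; lia.
- by rewrite ne_Sj //; case: eqVneq => [-> // | ne_kj]; apply: sa; lia.
- by rewrite ne_Sj //; case: eqVneq => [-> // | ne_kj]; apply: sb; lia.
Qed.

Lemma zeck_ladder_exists j x y : 2 <= j -> x <= y -> zeck_ge j x -> zeck_ge j y ->
  exists L a b, [/\ zeck_ladder j L a b, a j = x & b j = y].
Proof.
(* [t] bounds the number of levels left: distinct [j]-admissible [x < y] force
   [j - 2 <= F_(j-1) <= y]. *)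
have [t] : exists t, y + 3 <= j + t by exists (y + 3); apply: leq_addl.
elim: t j x y => [|t IH] j x y le_y_jt j2 le_xy hx hy.
all: have [lt_xy | eq_xy] : x < y \/ x = y by lia.
2,4: by rewrite -eq_xy; exists j, (fun=> x), (fun=> x); split=> //; apply: zeck_ladder_refl.
  by have := zeck_ge_gap j2 hx hy lt_xy; have := leq_pred_fib j.-1; lia.
have [x' [y' [hx' hy' le_xy' sx sy]]] := zeck_ge_step j2 lt_xy hx hy.
have [|L [a [b [lad ax' by']]]] := IH j.+1 x' y' _ (leqW j2) le_xy' hx' hy'; first by lia.
exists L, (fun k => if k == j then x else a k), (fun k => if k == j then y else b k).
by rewrite eqxx; split=> //; apply: zeck_ladder_cons; rewrite ?ax' ?by'.
Qed.

Theorem lemma5 (A B : nat) (hAB : A < B) :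
  exists (L : nat) (a b : nat -> nat),
    2 <= L /\
    a 2 = A /\ b 2 = B /\ a L = b L /\
    (forall j, 2 <= j < L -> a j <= a j.+1) /\
    (forall j, 2 <= j < L -> b j.+1 <= b j) /\
    (forall i j, 2 <= i -> i < j -> j <= L ->
        ~ zeck_digit i (a j) /\ ~ zeck_digit i (b j)) /\
    (forall j, 2 <= j < L ->
        (a j.+1 - a j = 0 \/ a j.+1 - a j = fib j.-1) /\
        (b j - b j.+1 = 0 \/ b j - b j.+1 = fib j)).
Proof.
have [L [a [b [[le2L eq_ab zab sa sb] a2 b2]]]] :=
  zeck_ladder_exists (leqnn 2) (ltnW hAB) (zeck_ge2 A) (zeck_ge2 B).
exists L, a, b; do 4 (split; first done).
split; first by move=> j /sa; lia.
split; first by move=> j /sb; lia.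
split=> [i j i2 lt_ij le_jL | j j_range].
  have /zab [za zb] : 2 <= j <= L by lia.
  by split; apply: zeck_ge_no_digit lt_ij _.
by have := sa j j_range; have := sb j j_range; lia.
Qed.
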